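(* Let $(\mathcal S,\mathcal A,P,r)$ be any finite MDP (general/multichain) and $(g^\star,h^\star)$ a solution of the modified Bellman equations. Let $V^0\in\mathbb R^n$, $0\le\lambda_k<1$ for $k\ge1$, and $V^k=\lambda_kV^{k-1}+(1-\lambda_k)TV^{k-1}$ for $k\ge1$ (Relaxed Value Iteration). Then for every $k\ge1$, \[\Big\|\frac{V^k-V^0}{\sum_{i=1}^k(1-\lambda_i)}-g^\star\Big\|_\infty\le\frac{2\big(1-\prod_{i=1}^k\lambda_i\big)}{\sum_{i=1}^k(1-\lambda_i)}\|V^0-h^\star\|_\infty.\]
   Context: An MDP $(\mathcal S,\mathcal A,P,r)$ has finite state space $\mathcal S$ ($|\mathcal S|=n$, functions identified with $\mathbb R^n$), finite action space, transition probabilities $P(s'\mid s,a)$ and bounded reward $r$. The Bellman optimality operator is $(TV)(s)=\max_a\{r(s,a)+\sum_{s'}P(s'\mid s,a)V(s')\}$. $g^\star(s)=\max_\pi\liminf_{T\to\infty}\frac1T\mathbb E_\pi[\sum_{t=0}^{T-1}r(s_t,a_t)\mid s_0=s]$ is the optimal average reward. A pair $(g,h)$ solves the modified Bellman equations if $\max_a\sum_{s'}P(s'\mid s,a)g(s')=g(s)$ and $\max_a\{r(s,a)+\sum_{s'}P(s'\mid s,a)h(s')\}=h(s)+g(s)$ for all $s$, with some policy attaining both maxima simultaneously; the first component of any solution equals $g^\star$. *)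

From mathcomp Require Import all_boot all_order all_algebra.
Set Implicit Arguments. Unset Strict Implicit. Unset Printing Implicit Defensive.
Import Order.TTheory GRing.Theory Num.Theory.
Local Open Scope ring_scope.

Section MDP.
Variables (R : realFieldType) (S A : finType).

(* maximum over the (finite, nonempty: a0 is a witness) action space;
   the value does not depend on the witness a0 *)
Definition maxA (a0 : A) (f : A -> R) : R := \big[Num.max/f a0]_(a : A) f a.

Definition stochastic (P : S -> A -> S -> R) : Prop :=
  (forall s a s', 0 <= P s a s') /\ (forall s a, \sum_(s' : S) P s a s' = 1).

Definition expP (P : S -> A -> S -> R) (s : S) (a : A) (V : S -> R) : R :=
  \sum_(s' : S) P s a s' * V s'.

Definition bellmanT (a0 : A) (P : S -> A -> S -> R) (r : S -> A -> R)
  (V : S -> R) : S -> R :=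
  fun s => maxA a0 (fun a => r s a + expP P s a V).

Definition supnorm (v : S -> R) : R := \big[Num.max/0]_(s : S) `|v s|.

Definition modified_bellman (a0 : A) (P : S -> A -> S -> R) (r : S -> A -> R)
  (g h : S -> R) : Prop :=
  (forall s, maxA a0 (fun a => expP P s a g) = g s) /\
  (forall s, maxA a0 (fun a => r s a + expP P s a h) = h s + g s) /\
  (exists pi : S -> A, forall s,
      expP P s (pi s) g = g s /\ r s (pi s) + expP P s (pi s) h = h s + g s).

End MDP.

From Pilot Require Import Defs.
From mathcomp Require Import all_boot all_order all_algebra.
From mathcomp Require Import ring lra.
Set Implicit Arguments. Unset Strict Implicit. Unset Printing Implicit Defensive.
Import Order.TTheory GRing.Theory Num.Theory.
Local Open Scope ring_scope.

(* By the modified Bellman equations, T maps W_t = h* + t g* to W_(t+1) for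
   every t >= 0, so with tau_k = sum_(1 <= i <= k) (1 - lambda_i) the
   iterates W_(tau_k) satisfy the relaxed recursion themselves.  Since T is
   nonexpansive in the sup norm, the error e_k = V^k - W_(tau_k) stays bounded
   by d = ||V^0 - h*||, and its drift e_k - e_0 is a convex combination of
   e_(k-1) - e_0 and a term of size at most 2d, whence
   ||e_k - e_0|| <= 2d (1 - prod_(1 <= i <= k) lambda_i).  Finally
   (V^k - V^0) / tau_k - g* = (e_k - e_0) / tau_k. *)

Lemma norm_convex_le (R : numDomainType) (l x y a b : R) :
  0 <= l <= 1 -> `|x| <= a -> `|y| <= b ->
  `|l * x + (1 - l) * y| <= l * a + (1 - l) * b.
Proof.
move=> /andP[l_ge0 l_le1] xa yb.
have l'_ge0 : 0 <= 1 - l by rewrite subr_ge0.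
apply: le_trans (ler_normD _ _) _.
by rewrite !normrM (ger0_norm l_ge0) (ger0_norm l'_ge0) lerD // ler_wpM2l.
Qed.

Section MaxOverActions.
Variables (R : realFieldType) (A : finType) (a0 : A).

Lemma le_maxA (f : A -> R) a : f a <= Defs.maxA a0 f.
Proof. exact: le_bigmax. Qed.

Lemma maxA_le (f : A -> R) c : (forall a, f a <= c) -> Defs.maxA a0 f <= c.
Proof. by move=> fc; apply: bigmax_le. Qed.

End MaxOverActions.

Section SupNorm.
Variables (R : realFieldType) (S : finType).

Lemma supnorm_ge0 (v : S -> R) : 0 <= supnorm v.
Proof. exact: bigmax_ge_id. Qed.

Lemma norm_le_supnorm (v : S -> R) s : `|v s| <= supnorm v.
Proof. exact: (le_bigmax _ (fun s => `|v s|)). Qed.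

Lemma supnorm_le (v : S -> R) c :
  0 <= c -> (forall s, `|v s| <= c) -> supnorm v <= c.
Proof. by move=> c_ge0 vc; apply: bigmax_le. Qed.

End SupNorm.

Section BellmanOperator.
Variables (R : realFieldType) (S A : finType) (a0 : A).
Variables (P : S -> A -> S -> R) (r : S -> A -> R).

Lemma expP_affine s a (h g : S -> R) t :
  expP P s a (fun s' => h s' + t * g s') = expP P s a h + t * expP P s a g.
Proof. by rewrite /expP mulr_sumr -big_split; apply: eq_bigr => s' _ /=; ring. Qed.

Lemma bellmanT_affine (g h : S -> R) t s :
  modified_bellman a0 P r g h -> 0 <= t ->
  bellmanT a0 P r (fun s => h s + t * g s) s = h s + (t + 1) * g s.
Proof.
move=> [gE [hE [pi piE]]] t_ge0; apply/eqP; rewrite eq_le; apply/andP; split.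
  apply: maxA_le => a; rewrite expP_affine.
  have ha := le_maxA a0 (fun a => r s a + expP P s a h) a.
  have ga := le_maxA a0 (fun a => expP P s a g) a.
  rewrite /= hE in ha; rewrite /= gE in ga.
  have : t * expP P s a g <= t * g s by rewrite ler_wpM2l.
  lra.
have [pi_g pi_h] := piE s.
apply: le_trans (le_maxA a0 _ (pi s)).
by rewrite /= expP_affine pi_g addrA pi_h; lra.
Qed.

Hypothesis P_stochastic : stochastic P.

Lemma expP_le_shift s a (V U : S -> R) c :
  (forall s, V s <= U s + c) -> expP P s a V <= expP P s a U + c.
Proof.
have [P_ge0 P_sum1] := P_stochastic; move=> VU.
have -> : c = \sum_(s' : S) P s a s' * c by rewrite -mulr_suml P_sum1 mul1r.
rewrite /expP -big_split /=; apply: ler_sum => s' _.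
by rewrite -mulrDr ler_wpM2l.
Qed.

Lemma bellmanT_le_shift (V U : S -> R) c s :
  (forall s, V s <= U s + c) ->
  bellmanT a0 P r V s <= bellmanT a0 P r U s + c.
Proof.
move=> VU; apply: maxA_le => a.
apply: le_trans (_ : r s a + expP P s a U + c <= _).
  by rewrite -addrA lerD2l expP_le_shift.
by rewrite lerD2r (le_maxA a0 (fun a => r s a + expP P s a U)).
Qed.

Lemma bellmanT_nonexpansive (V U : S -> R) c :
  (forall s, `|V s - U s| <= c) ->
  forall s, `|bellmanT a0 P r V s - bellmanT a0 P r U s| <= c.
Proof.
move=> VU s.
have [VleU UleV] : (forall s, V s <= U s + c) /\ (forall s, U s <= V s + c).
  by split=> s'; move: (VU s'); rewrite ler_norml; lra.
have := bellmanT_le_shift s VleU; have := bellmanT_le_shift s UleV.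
rewrite ler_norml; lra.
Qed.

End BellmanOperator.

Section RelaxedIteration.
Variables (R : realFieldType) (S : finType) (T : (S -> R) -> S -> R).
Variables (g h : S -> R) (lambda : nat -> R) (V : nat -> S -> R).

Hypothesis T_nonexpansive : forall (U W : S -> R) c,
  (forall s, `|U s - W s| <= c) -> forall s, `|T U s - T W s| <= c.
Hypothesis T_affine : forall t s,
  0 <= t -> T (fun s => h s + t * g s) s = h s + (t + 1) * g s.
Hypothesis lambda_range : forall k, (1 <= k)%N -> 0 <= lambda k < 1.
Hypothesis V_step : forall k, (1 <= k)%N ->
  V k = (fun s => lambda k * V k.-1 s + (1 - lambda k) * T (V k.-1) s).

Let tau n := \sum_(1 <= i < n.+1) (1 - lambda i).
Let lambda_prod n := \prod_(1 <= i < n.+1) lambda i.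
Let W n s := h s + tau n * g s.
Let err n s := V n s - W n s.
Let d := supnorm (fun s => V 0%N s - h s).

Lemma lambda_in01 k : (1 <= k)%N -> 0 <= lambda k <= 1.
Proof. by move=> /lambda_range /andP[-> /ltW]. Qed.

Lemma tau0 : tau 0 = 0.
Proof. exact: big_geq. Qed.

Lemma tauS n : tau n.+1 = tau n + (1 - lambda n.+1).
Proof. exact: big_nat_recr. Qed.

Lemma lambda_prod0 : lambda_prod 0 = 1.
Proof. exact: big_geq. Qed.

Lemma lambda_prodS n : lambda_prod n.+1 = lambda_prod n * lambda n.+1.
Proof. exact: big_nat_recr. Qed.

Lemma tau_ge0 n : 0 <= tau n.
Proof.
rewrite /tau big_nat_cond; apply: sumr_ge0 => i /andP[/andP[i_ge1 _] _].
by have /andP[_] := lambda_in01 i_ge1; rewrite subr_ge0.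
Qed.

Lemma tau_gt0 n : (1 <= n)%N -> 0 < tau n.
Proof.
case: n => // n _; rewrite tauS.
by have /andP[_ lt1] := lambda_range (ltn0Sn n); have := tau_ge0 n; lra.
Qed.

Lemma lambda_prod_in01 n : 0 <= lambda_prod n <= 1.
Proof.
have in01 i : (1 <= i < n.+1)%N -> 0 <= lambda i <= 1 by case/andP=> /lambda_in01.
rewrite /lambda_prod big_nat_cond; apply/andP; split.
  by apply: prodr_ge0 => i /andP[/in01 /andP[]].
by apply: prodr_ile1 => i /andP[/in01].
Qed.

Lemma W_step n s :
  W n.+1 s = lambda n.+1 * W n s + (1 - lambda n.+1) * T (W n) s.
Proof. by rewrite /W T_affine ?tau_ge0 // tauS; ring. Qed.

Lemma err_step n s :
  err n.+1 s = lambda n.+1 * err n s + (1 - lambda n.+1) * (T (V n) s - T (W n) s).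
Proof. by rewrite /err W_step (V_step (ltn0Sn n)) /=; ring. Qed.

Lemma err0 s : err 0 s = V 0%N s - h s.
Proof. by rewrite /err /W tau0 mul0r addr0. Qed.

Lemma err_le n s : `|err n s| <= d.
Proof.
elim: n s => [|n IHn] s; first by rewrite err0 (norm_le_supnorm (fun s => V 0%N s - h s)).
have := norm_convex_le (lambda_in01 (ltn0Sn n)) (IHn s) (T_nonexpansive IHn s).
by rewrite -err_step; congr (_ <= _); ring.
Qed.

Lemma err_drift_le n s : `|err n s - err 0 s| <= 2 * d * (1 - lambda_prod n).
Proof.
elim: n s => [|n IHn] s; first by rewrite subrr normr0 lambda_prod0 subrr mulr0.
have jump_le : `|(T (V n) s - T (W n) s) - err 0 s| <= d + d.
  by apply: le_trans (ler_normB _ _) (lerD (T_nonexpansive (err_le n) s) (err_le 0 s)).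
have := norm_convex_le (lambda_in01 (ltn0Sn n)) (IHn s) jump_le.
have -> : err n.+1 s - err 0 s = lambda n.+1 * (err n s - err 0 s)
    + (1 - lambda n.+1) * ((T (V n) s - T (W n) s) - err 0 s).
  by rewrite err_step; ring.
by rewrite lambda_prodS; congr (_ <= _); ring.
Qed.

Theorem relaxed_iteration_gain_error k : (1 <= k)%N ->
  supnorm (fun s => (V k s - V 0%N s) / (\sum_(1 <= i < k.+1) (1 - lambda i)) - g s)
  <= 2 * (1 - \prod_(1 <= i < k.+1) lambda i) / (\sum_(1 <= i < k.+1) (1 - lambda i))
     * supnorm (fun s => V 0%N s - h s).
Proof.
move=> k_ge1; rewrite -/(tau k) -/(lambda_prod k) -/d.
have tau_pos := tau_gt0 k_ge1.
have /andP[_ prod_le1] := lambda_prod_in01 k.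
apply: supnorm_le => [|s].
  by apply/mulr_ge0/supnorm_ge0/divr_ge0/ltW/tau_pos/mulr_ge0; rewrite ?subr_ge0.
have -> : (V k s - V 0%N s) / tau k - g s = (err k s - err 0 s) / tau k.
  by rewrite /err /W tau0; field; rewrite gt_eqF.
rewrite normrM normfV (gtr0_norm tau_pos) ler_pdivrMr //.
have -> : 2 * (1 - lambda_prod k) / tau k * d * tau k = 2 * d * (1 - lambda_prod k).
  by field; rewrite gt_eqF.
exact: err_drift_le.
Qed.

End RelaxedIteration.

Theorem theorem7 (R : realFieldType) (S A : finType) (a0 : A)
  (P : S -> A -> S -> R) (r : S -> A -> R) (g h : S -> R)
  (lambda : nat -> R) (V : nat -> S -> R) :
  stochastic P ->
  modified_bellman a0 P r g h ->
  (forall k, (1 <= k)%N -> 0 <= lambda k < 1) ->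
  (forall k, (1 <= k)%N ->
     V k = (fun s => lambda k * V k.-1 s + (1 - lambda k) * bellmanT a0 P r (V k.-1) s)) ->
  forall k, (1 <= k)%N ->
    supnorm (fun s => (V k s - V 0%N s) / (\sum_(1 <= i < k.+1) (1 - lambda i)) - g s)
    <= 2 * (1 - \prod_(1 <= i < k.+1) lambda i) / (\sum_(1 <= i < k.+1) (1 - lambda i))
       * supnorm (fun s => V 0%N s - h s).
Proof.
move=> P_stochastic gh_bellman lambda_range V_step.
apply: relaxed_iteration_gain_error lambda_range V_step.
  exact: bellmanT_nonexpansive.
by move=> t s; apply: bellmanT_affine.
Qed.
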